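(* For every hypothesis class $\mathcal{H} \subseteq \{0,1\}^{\mathcal{X}}$ and every time horizon $T \in \mathbb{N}$, $$\frac{1}{8}\min\Bigl\{\max\Bigl\{\sqrt{(\operatorname{W}(\mathcal{H})-1)\,T},\ \operatorname{L}(\mathcal{H})\Bigr\},\ T\Bigr\} \;\le\; \inf_{\mathcal{A}} \operatorname{M}_{\mathcal{A}}(T,\mathcal{H}) \;\le\; \operatorname{AL}_{\operatorname{W}(\mathcal{H})}(\mathcal{H}) + 2\sqrt{(\operatorname{W}(\mathcal{H})-1)\,T},$$ where the infimum is over all (possibly randomized) online learners operating under apple tasting feedback.
   Context: Online binary classification: over rounds $t=1,\dots,T$, an adversary picks $(x_t,y_t)\in\mathcal{X}\times\{0,1\}$ and reveals $x_t$; the learner $\mathcal{A}$ (possibly randomized) outputs a prediction $\hat y_t=\mathcal{A}(x_t)\in\{0,1\}$ based on the history; under apple tasting feedback the learner observes $y_t$ only if $\hat y_t=1$. In the realizable setting, $\operatorname{M}_{\mathcal{A}}(T,\mathcal{H}) := \sup_{h\in\mathcal{H}}\sup_{x_1,\dots,x_T}\mathbb{E}\bigl[\sum_{t=1}^T \mathbb{1}\{\mathcal{A}(x_t)\neq h(x_t)\}\bigr]$ with $y_t=h(x_t)$, the expectation being over the learner's randomness. Apple Littlestone (AL) tree of width $w\in\mathbb{N}=\{1,2,\dots\}$ and depth $d$: call a binary string $u$ an internal node if $|u|<d$ and $u$ contains fewer than $w$ ones; the tree assigns an instance $x_u\in\mathcal{X}$ to every internal node. A path is a binary string $\sigma$ all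 of whose proper prefixes are internal nodes but which is not itself an internal node (so either $|\sigma|=d$ or $\sigma$ contains exactly $w$ ones). The tree is shattered by $\mathcal{H}$ if for every path $\sigma$ there is $h\in\mathcal{H}$ with $h(x_{(\sigma_1,\dots,\sigma_{i-1})})=\sigma_i$ for all $i\le|\sigma|$. (When $w\ge d$ this is a complete binary tree of depth $d$, i.e. a Littlestone tree.) The Littlestone dimension $\operatorname{L}(\mathcal{H})$ is the largest $d$ such that a complete binary (Littlestone) tree of depth $d$ is shattered by $\mathcal{H}$ ($\infty$ if arbitrarily large depths are shattered). The Apple Littlestone dimension $\operatorname{AL}_w(\mathcal{H})$ is the largest $d$ such that an AL tree of width $w$ and depth $d$ is shattered by $\mathcal{H}$; it is $\infty$ if arbitrarily large depths occur and $0$ if there is no shattered AL tree of width $w$. The Effective width $\operatorname{W}(\mathcal{H})$ is the smallest $w\in\mathbb{N}$ with $\operatorname{AL}_w(\mathcal{H})<\infty$, and $\infty$ if none exists. *)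

From HB Require Import structures.
From mathcomp Require Import all_boot all_order all_algebra.
From mathcomp Require Import boolp classical_sets reals constructive_ereal ereal.
Set Implicit Arguments. Unset Strict Implicit. Unset Printing Implicit Defensive.
Import Order.TTheory GRing.Theory Num.Theory.
Local Open Scope ring_scope.
Local Open Scope classical_set_scope.

(* A tree is a partial labelling of binary strings (nodes) by instances;
   it must label every internal node.  [internal] selects the internal nodes. *)
Definition tree (X : Type) := bitseq -> option X.

Definition tree_wf (X : Type) (internal : pred bitseq) (t : tree X) : Prop :=
  forall u : bitseq, internal u -> t u <> None.

Definition is_path (internal : pred bitseq) (s : bitseq) : Prop :=
  (forall i, (i < size s)%N -> internal (take i s)) /\ ~~ internal s.

Definition shattered (X : Type) (H : set (X -> bool)) (internal : pred bitseq)
    (t : tree X) : Prop :=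
  forall s, is_path internal s ->
    exists h, H h /\
      forall i, (i < size s)%N -> omap h (t (take i s)) = Some (nth false s i).

Definition al_internal (w d : nat) : pred bitseq :=
  fun u => (size u < d)%N && (count id u < w)%N.

Definition lit_internal (d : nat) : pred bitseq := fun u => (size u < d)%N.

Definition AL_shatterable (X : Type) (H : set (X -> bool)) (w d : nat) : Prop :=
  exists t : tree X, tree_wf (al_internal w d) t /\ shattered H (al_internal w d) t.

Definition L_shatterable (X : Type) (H : set (X -> bool)) (d : nat) : Prop :=
  exists t : tree X, tree_wf (lit_internal d) t /\ shattered H (lit_internal d) t.

Section Dims.
Variable R : realType.
Local Open Scope ereal_scope.

(* largest shattered depth; +oo if unbounded; 0 if none is shattered *)
Definition ALdim (X : Type) (H : set (X -> bool)) (w : nat) : \bar R :=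
  ereal_sup ([set 0] `|` [set (d%:R)%:E | d in AL_shatterable H w]).

Definition Ldim (X : Type) (H : set (X -> bool)) : \bar R :=
  ereal_sup ([set 0] `|` [set (d%:R)%:E | d in L_shatterable H]).

(* effective width: smallest w >= 1 with ALdim finite; +oo if none *)
Definition effW (X : Type) (H : set (X -> bool)) : \bar R :=
  ereal_inf [set (w%:R)%:E | w in [set w : nat | (0 < w)%N /\ ALdim H w < +oo]].

End Dims.

(* What the learner has observed before a round: for each past round the
   instance x_s, its own prediction yhat_s, and the label y_s if yhat_s = 1
   (None otherwise). *)
Definition history (X : Type) := seq (X * bool * option bool).

(* A (possibly randomized) learner, as a behavioural strategy: given the
   history and the current instance, the probability of predicting 1. *)
Definition learner (R : realType) (X : Type) := history X -> X -> R.

Definition valid_learner (R : realType) (X : Type) (A : learner R X) : Prop :=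
  forall hs x, 0 <= A hs x <= 1.

Fixpoint exp_mistakes (R : realType) (X : Type) (A : learner R X)
    (h : X -> bool) (hs : history X) (xs : seq X) : R :=
  match xs with
  | [::] => 0
  | x :: xs' =>
      let p := A hs x in
      p * ((~~ h x)%:R + exp_mistakes A h (rcons hs (x, true, Some (h x))) xs')
      + (1 - p) * ((h x)%:R + exp_mistakes A h (rcons hs (x, false, None)) xs')
  end.

(* M_A(T, H): worst case over h in H and x_1..x_T (0 if H is empty) *)
Definition Mworst (R : realType) (X : Type) (A : learner R X) (T : nat)
    (H : set (X -> bool)) : \bar R :=
  ereal_sup ([set 0%E] `|`
    [set z | exists h xs, H h /\ size xs = T /\ z = (exp_mistakes A h [::] xs)%:E]).

Definition minimax (R : realType) (X : Type) (T : nat) (H : set (X -> bool)) : \bar R :=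
  ereal_inf [set Mworst A T H | A in [set A : learner R X | valid_learner A]].

(* The learner keeps the version space [V] and a width budget
   [j], initially the effective width [w].  On an instance [x] on which the
   answer 0 would not lower the largest depth of an AL tree of width [j]
   shattered by [V], predicting 1 is an exploration and is done only with
   probability [eps]; otherwise the learner predicts 1.  A revealed 0 on a
   non-exploration lowers that depth, a revealed 1 on an exploration lowers
   [j], and a missed 1 during an exploration costs [1 - eps] in expectation.
   Hence depth + (j - 1) c + eps (rounds left) is a potential for the
   expected number of mistakes as soon as [1 - eps <= eps c]; with
   [eps c = 1] and [eps T = (w - 1) c = sqrt ((w - 1) T)] it gives
   AL_w + 2 sqrt ((w - 1) T).

   Given a shattered AL tree of width [k] and depth [N], the
   adversary walks down a random path whose bits are 1 with probability [p],
   showing each node [m] times and labelling it by the bit.  Until it predicts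
   1 the learner learns nothing, so every node costs it at least
   [min (p m) (1 - p)].  By Markov's inequality the path has expected depth
   at least [N / 2] when [p N <= k].  Littlestone trees ([p = 1/2], [m = 1])
   give [min L T / 4]; AL trees of width [W - 1], which exist at every depth,
   with [N ~ sqrt ((W - 1) T)] and [m = T / N] give
   [min (sqrt ((W - 1) T)) T / 8]. *)

From mathcomp Require Import all_boot all_order all_algebra.
From mathcomp Require Import boolp classical_sets reals constructive_ereal ereal.
From mathcomp Require Import zify ring lra.

Set Implicit Arguments. Unset Strict Implicit. Unset Printing Implicit Defensive.
Import Order.TTheory GRing.Theory Num.Theory.
Local Open Scope classical_set_scope.
Local Open Scope ring_scope.

(** * Apple Littlestone trees *)

Section ALTrees.
Variable X : Type.
Implicit Types (V : set (X -> bool)) (t : tree X) (s u : bitseq).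

Definition realizes t s (h : X -> bool) :=
  forall i, (i < size s)%N -> omap h (t (take i s)) = Some (nth false s i).

Definition subtree t (b : bool) : tree X := fun u => t (b :: u).

Lemma realizes_cons t b s h :
  realizes t (b :: s) h <-> omap h (t [::]) = Some b /\ realizes (subtree t b) s h.
Proof.
split=> [Rh | [Rh0 Rh] [|i] //=]; last exact: Rh.
by split=> [|i]; [exact: Rh 0%N isT | exact: Rh i.+1].
Qed.

Lemma al_internal_cons w d b u :
  al_internal w d.+1 (b :: u) = al_internal (w - b) d u.
Proof. by rewrite /al_internal /= ltnS ltn_subRL. Qed.

Lemma is_path_nil (I : pred bitseq) : is_path I [::] <-> ~~ I [::].
Proof. by split=> [[]|]. Qed.

Lemma is_path_cons w d b s :
  is_path (al_internal w d.+1) (b :: s) <->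
  (0 < w)%N /\ is_path (al_internal (w - b) d) s.
Proof.
rewrite /is_path al_internal_cons; split=> [[Ps Ns] | [w_gt0 [Ps Ns]]].
  split; first exact: Ps 0%N isT.
  by split=> // i lti; have := Ps i.+1 lti; rewrite /= al_internal_cons.
by split=> // [[|i]] lti //=; rewrite al_internal_cons; exact: Ps.
Qed.

Lemma lit_internal_al w d : (d < w)%N -> lit_internal d = al_internal w d.
Proof.
move=> ltdw; apply: funext => u; rewrite /lit_internal /al_internal.
case: ltnP => //= ltud; symmetry.
exact: leq_ltn_trans (count_size _ _) (ltn_trans ltud ltdw).
Qed.

Lemma L_shatterable_AL V w d :
  (d < w)%N -> L_shatterable V d <-> AL_shatterable V w d.
Proof. by move=> /lit_internal_al E; rewrite /L_shatterable E. Qed.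

Lemma AL_shatterable_trivial V w d :
  (exists h, V h) -> ~~ al_internal w d [::] -> AL_shatterable V w d.
Proof.
move=> [h Vh] root_leaf; exists (fun _ => None); split.
  move=> u /andP[ltd ltw]; move: root_leaf.
  by rewrite /al_internal /= (leq_ltn_trans _ ltd) ?(leq_ltn_trans _ ltw).
move=> [|b s] [Ps _]; exists h; split=> // i lti.
by have := Ps 0%N isT; rewrite (negbTE root_leaf).
Qed.

Lemma AL_shatterable_sub V V' w d :
  V `<=` V' -> AL_shatterable V w d -> AL_shatterable V' w d.
Proof.
move=> sVV' [t [wf_t Sh]]; exists t; split=> // s Ps.
by have [h [Vh Rh]] := Sh s Ps; exists h; split=> //; apply: sVV'.
Qed.

Lemma AL_shatterable_depthS V w d :
  AL_shatterable V w d.+1 -> AL_shatterable V w d.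
Proof.
move=> [t [wf_t Sh]]; exists t; split.
  by move=> u /andP[ltu ltc]; apply: wf_t; apply/andP; split=> //; exact: ltnW.
move=> s [Ps Ns].
case: (boolP (al_internal w d.+1 s)) => int_s; last first.
  apply: Sh; split=> // i lti; have /andP[? ?] := Ps i lti.
  by apply/andP; split=> //; exact: ltnW.
(* [s] has length [d] but is internal at depth [d + 1]: extend it by a 0 *)
have size_s : size s = d.
  by move: Ns int_s; rewrite /al_internal; case: (count id s < w)%N; lia.
have [h [Vh Rh]] : exists h, V h /\ realizes t (rcons s false) h.
  apply: Sh; split; last by rewrite /al_internal size_rcons size_s ltnn.
  move=> i; rewrite size_rcons ltnS leq_eqVlt => /orP[/eqP ->|lti].
    by rewrite -cats1 take_size_cat.
  rewrite -cats1 takel_cat ?(ltnW lti) //; have /andP[? ?] := Ps i lti.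
  by apply/andP; split=> //; exact: ltnW.
exists h; split=> // i lti; have := Rh i; rewrite size_rcons ltnS ltnW // => /(_ isT).
by rewrite -cats1 takel_cat ?nth_cat ?lti // ltnW.
Qed.

Lemma AL_shatterable_le_depth V w d d' :
  (d' <= d)%N -> AL_shatterable V w d -> AL_shatterable V w d'.
Proof.
elim: d => [|d IH]; first by rewrite leqn0 => /eqP ->.
rewrite leq_eqVlt => /orP[/eqP -> // | ]; rewrite ltnS => led /AL_shatterable_depthS.
exact: IH.
Qed.

Lemma L_shatterable_le_depth V d d' :
  (d' <= d)%N -> L_shatterable V d -> L_shatterable V d'.
Proof.
move=> led /(L_shatterable_AL _ (ltnSn d))/(AL_shatterable_le_depth led) Sh.
exact/(L_shatterable_AL _ (leq_ltn_trans led (ltnSn d))).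
Qed.

Definition restrict V (x : X) (b : bool) := [set h | V h /\ h x = b].

Lemma AL_shatterable_split V x w d :
  (0 < w)%N ->
  AL_shatterable (restrict V x false) w d ->
  AL_shatterable (restrict V x true) w.-1 d ->
  AL_shatterable V w d.+1.
Proof.
move=> w_gt0 [t0 [wf0 Sh0]] [t1 [wf1 Sh1]].
pose t : tree X := fun u =>
  if u is b :: u' then (if b then t1 u' else t0 u') else Some x.
exists t; split.
  case=> [|[|] u] //; rewrite al_internal_cons ?subn1 ?subn0; [exact: wf1|exact: wf0].
case=> [|b s]; first by move=> /is_path_nil; rewrite /al_internal /= w_gt0.
move=> /is_path_cons[_ Ps].
have [h [[Vh hx] Rh]] : exists h, restrict V x b h /\ realizes (subtree t b) s h.
  by case: b Ps; rewrite ?subn1 ?subn0; [exact: Sh1 | exact: Sh0].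
by exists h; split=> //; apply/realizes_cons; rewrite /= hx.
Qed.

End ALTrees.

Section MaxDepth.
Variable X : Type.
Implicit Types V : set (X -> bool).

Definition al_bounded V w := exists B, forall d, AL_shatterable V w d -> (d <= B)%N.

Definition al_depth V w : nat := xget 0%N
  [set D | AL_shatterable V w D /\ forall d, AL_shatterable V w d -> (d <= D)%N].

Lemma al_depthP V w : (exists h, V h) -> al_bounded V w ->
  AL_shatterable V w (al_depth V w) /\
  forall d, AL_shatterable V w d -> (d <= al_depth V w)%N.
Proof.
move=> neV [B leB].
have ex0 : exists d, `[< AL_shatterable V w d >].
  by exists 0%N; apply/asboolP; exact: AL_shatterable_trivial neV _.
have ub d : `[< AL_shatterable V w d >] -> (d <= B)%N by move/asboolP/leB.
case: (ex_maxnP ex0 ub) => D /asboolP ShD maxD.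
have maxD' d : AL_shatterable V w d -> (d <= D)%N by move/asboolP/maxD.
by have := xgetI 0%N (P := [set D | AL_shatterable V w D /\
  forall d, AL_shatterable V w d -> (d <= D)%N]) (conj ShD maxD').
Qed.

Lemma al_depth_lt V w D : (exists h, V h) -> al_bounded V w ->
  ~ AL_shatterable V w D -> (al_depth V w < D)%N.
Proof.
move=> neV bddV NSh; have [Sh _] := al_depthP neV bddV; rewrite ltnNge.
by apply/negP => leD; apply: NSh; exact: AL_shatterable_le_depth Sh.
Qed.

Lemma al_depth_sub V V' w : V' `<=` V -> (exists h, V' h) -> al_bounded V w ->
  al_bounded V' w /\ (al_depth V' w <= al_depth V w)%N.
Proof.
move=> sV'V [h V'h] bddV.
have [_ maxV] := al_depthP (ex_intro _ h (sV'V h V'h)) bddV.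
have bddV' : al_bounded V' w.
  by exists (al_depth V w) => d /(AL_shatterable_sub sV'V)/maxV.
split=> //; have [ShV' _] := al_depthP (ex_intro _ h V'h) bddV'.
exact/maxV/(AL_shatterable_sub sV'V).
Qed.

(* Predicting 1 on [x] explores when the answer 0 would not shrink the depth. *)
Definition explore V w x : bool :=
  `[< AL_shatterable (restrict V x false) w (al_depth V w) >].

Definition update (st : set (X -> bool) * nat) (e : X * bool * option bool) :=
  let: (V, w) := st in
  if e is (x, _, Some y) then (restrict V x y, if y && explore V w x then w.-1 else w)
  else st.

Lemma al_depth_explore V w x h :
  explore V w x -> V h -> h x -> (0 < w)%N -> al_bounded V w ->
  [/\ (1 < w)%N, al_bounded (restrict V x true) w.-1 &
      (al_depth (restrict V x true) w.-1 <= al_depth V w)%N].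
Proof.
move=> /asboolP Sh0 Vh hx w_gt0 bddV.
have [_ maxV] := al_depthP (ex_intro _ h Vh) bddV.
have NSh1 : ~ AL_shatterable (restrict V x true) w.-1 (al_depth V w).
  by move=> /(AL_shatterable_split w_gt0 Sh0)/maxV; rewrite ltnn.
have ne1 : exists h, restrict V x true h by exists h.
have w_gt1 : (1 < w)%N.
  rewrite ltnNge; apply/negP => w_le1; apply: NSh1.
  by apply: AL_shatterable_trivial; rewrite // /al_internal /=; lia.
have bdd1 : al_bounded (restrict V x true) w.-1.
  exists (al_depth V w) => d Sh1; rewrite leqNgt; apply/negP => ltd.
  by apply: NSh1; exact: AL_shatterable_le_depth (ltnW ltd) Sh1.
by split=> //; exact/ltnW/al_depth_lt.
Qed.

Lemma al_depth_restrict V w x h : V h -> al_bounded V w ->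
  al_bounded (restrict V x (h x)) w /\
  (al_depth (restrict V x (h x)) w + (~~ explore V w x && ~~ h x) <= al_depth V w)%N.
Proof.
move=> Vh bddV; have ne : exists g, restrict V x (h x) g by exists h.
have [bdd' le'] := al_depth_sub (fun g (Vg : restrict V x (h x) g) => Vg.1) ne bddV.
split=> //; case: (boolP (explore V w x)) => /= [_|/asboolP NSh]; first by rewrite addn0.
case hx: (h x) ne => ne /=; first by rewrite addn0 -hx.
by rewrite addn1; apply: al_depth_lt ne _ NSh; rewrite -hx.
Qed.

End MaxDepth.

(** * Upper bound *)

Section Mistakes.
Variables (R : realType) (X : Type) (A : learner R X).
Hypothesis A_valid : valid_learner A.

Lemma exp_mistakes_ge0 h hs xs : 0 <= exp_mistakes A h hs xs.
Proof.
elim: xs hs => [|x xs IH] hs //=; have /andP[A_ge0 A_le1] := A_valid hs x.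
by rewrite addr_ge0 // mulr_ge0 ?subr_ge0 ?addr_ge0.
Qed.

Lemma exp_mistakes_cat h hs xs ys :
  exp_mistakes A h hs xs <= exp_mistakes A h hs (xs ++ ys).
Proof.
elim: xs hs => [|x xs IH] hs /=; first exact: exp_mistakes_ge0.
have /andP[A_ge0 A_le1] := A_valid hs x.
by rewrite lerD // ler_wpM2l ?subr_ge0 // lerD2l.
Qed.

End Mistakes.

Section UpperBound.
Variables (R : realType) (X : Type) (H : set (X -> bool)) (w : nat) (eps c : R).
Hypotheses (eps_ge0 : 0 <= eps) (eps_le1 : eps <= 1) (c_ge0 : 0 <= c).
Hypothesis eps_c : (1 < w)%N -> 1 - eps <= eps * c.
Implicit Types V : set (X -> bool).

Definition al_state (hs : history X) := foldl (@update X) (H, w) hs.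

Definition al_learner : learner R X := fun hs x =>
  let: (V, j) := al_state hs in if explore V j x then eps else 1.

Lemma al_learner_valid : valid_learner al_learner.
Proof.
move=> hs x; rewrite /al_learner; case: (al_state hs) => V j.
by case: explore; rewrite ?eps_ge0 ?eps_le1 ?ler01 ?lexx.
Qed.

Definition potential V j : R := (al_depth V j)%:R + (j.-1)%:R * c.

Lemma potential_ge0 V j : 0 <= potential V j.
Proof. by rewrite addr_ge0 ?mulr_ge0. Qed.

Lemma potential_restrict V V' j k :
  (al_depth V' j + k <= al_depth V j)%N -> potential V' j + k%:R <= potential V j.
Proof. by rewrite -(ler_nat R) natrD /potential => ?; lra. Qed.

Lemma potential_pred V V' j : (1 < j)%N ->
  (al_depth V' j.-1 <= al_depth V j)%N -> potential V' j.-1 + c <= potential V j.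
Proof.
move=> j_gt1; have jE : (j.-1)%:R = (j.-2)%:R + 1 :> R.
  by rewrite natr1 prednK // -ltnS prednK // ltnW.
by rewrite -(ler_nat R) /potential jE => ?; lra.
Qed.

Lemma potential_update V j x h V' j' (q := if explore V j x then eps else 1) :
  V h -> (0 < j)%N -> (j <= w)%N -> al_bounded V j ->
  update (V, j) (x, true, Some (h x)) = (V', j') ->
  [/\ V' h, (0 < j')%N, (j' <= j)%N, al_bounded V' j' &
      q * ((~~ h x)%:R + potential V' j') + (1 - q) * (h x)%:R <= q * potential V j + eps].
Proof.
(* [lra] ignores section hypotheses, hence the local copy [e0]. *)
move=> Vh j_gt0 le_jw bddV [<- <-]; rewrite /q; have e0 := eps_ge0.
have [bdd' /potential_restrict le'] := al_depth_restrict x Vh bddV.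
case: (boolP (explore V j x)) => ex; case hx: (h x) bdd' le' => bdd' le' /=;
  rewrite ex /= in le'.
- have [j_gt1 bdd1 /(potential_pred j_gt1) le1] := al_depth_explore ex Vh hx j_gt0 bddV.
  split=> //; [by rewrite -ltnS prednK | exact: leq_pred |].
  have ec := eps_c (leq_trans j_gt1 le_jw).
  have := ler_wpM2l e0 le1; lra.
- have := ler_wpM2l e0 le'; split=> //; lra.
- split=> //; lra.
- split=> //; lra.
Qed.

Lemma al_learner_mistakes h xs hs V j :
  al_state hs = (V, j) -> V h -> (0 < j)%N -> (j <= w)%N -> al_bounded V j ->
  exp_mistakes al_learner h hs xs <= potential V j + eps * (size xs)%:R.
Proof.
elim: xs hs V j => [|x xs IH] hs V j st Vh j_gt0 le_jw bddV.
  by rewrite mulr0 addr0 potential_ge0.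
have next e : al_state (rcons hs e) = update (V, j) e.
  by rewrite /al_state foldl_rcons -/(al_state hs) st.
case E : (update (V, j) (x, true, Some (h x))) => [V' j'].
have [V'h j'_gt0 le_j'j bdd' drop] := potential_update Vh j_gt0 le_jw bddV E.
have e1 := IH _ _ _ (etrans (next _) E) V'h j'_gt0 (leq_trans le_j'j le_jw) bdd'.
have e0 := IH _ _ _ (next (x, false, None)) Vh j_gt0 le_jw bddV.
have qE : al_learner hs x = if explore V j x then eps else 1 by rewrite /al_learner st.
have /andP[q_ge0 q_le1] := al_learner_valid hs x.
rewrite /= qE in q_ge0 q_le1 *; set q := (if _ then _ else _) in drop q_ge0 q_le1 *.
apply: (le_trans (y := q * ((~~ h x)%:R + (potential V' j' + eps * (size xs)%:R)) +
                        (1 - q) * ((h x)%:R + (potential V j + eps * (size xs)%:R)))).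
  by rewrite lerD // ler_wpM2l ?subr_ge0 // lerD2l.
rewrite -natr1; lra.
Qed.

Lemma Mworst_al_learner T : (0 < w)%N -> al_bounded H w ->
  (Mworst al_learner T H <= (potential H w + eps * T%:R)%:E)%E.
Proof.
move=> w_gt0 bddH; apply: ge_ereal_sup => _ [->|[h [xs [Hh [<- ->]]]]].
  by rewrite lee_fin addr_ge0 ?potential_ge0 ?mulr_ge0.
by rewrite lee_fin; apply: al_learner_mistakes.
Qed.

End UpperBound.

(** * Lower bound *)

Section Survival.
Variables (R : realType) (p : R).
Hypotheses (p_ge0 : 0 <= p) (p_le1 : p <= 1).

(* [surv j i] is the probability that [i] independent Bernoulli([p]) bits
   contain fewer than [j] ones, i.e. that a random path of an AL tree of
   width [j] is still internal at depth [i]. *)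
Fixpoint surv (j i : nat) : R :=
  match i, j with
  | 0, _ => (0 < j)%N%:R
  | _.+1, 0 => 0
  | i'.+1, j'.+1 => (1 - p) * surv j i' + p * surv j' i'
  end.

Definition exp_depth j N := \sum_(i < N) surv j i.

Lemma surv_width0 i : surv 0 i = 0.
Proof. by case: i. Qed.

Lemma surv_ge0 j i : 0 <= surv j i.
Proof.
elim: i j => [|i IH] [|j] //=.
by rewrite addr_ge0 // mulr_ge0 ?subr_ge0.
Qed.

Lemma surv_le_width i : {homo surv^~ i : j k / (j <= k)%N >-> j <= k}.
Proof.
apply: homo_leq => [//|j k l|j]; first exact: le_trans.
elim: i j => [|i IH] [|j] /=; rewrite ?ler_nat //.
  by rewrite addr_ge0 // mulr_ge0 ?subr_ge0 ?surv_ge0.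
by rewrite lerD // ler_wpM2l ?subr_ge0.
Qed.

(* [\sum_(k < J) P(#ones >= k + 1) <= E[#ones] = i p] *)
Lemma surv_deficit_sum J i : \sum_(k < J) (1 - surv k.+1 i) <= i%:R * p.
Proof.
elim: i J => [|i IH] J.
  by rewrite big1 ?mul0r // => k _; rewrite subrr.
rewrite (eq_bigr (fun k : 'I_J => (1 - p) * (1 - surv k.+1 i) + p * (1 - surv k i)));
  last by move=> k _ /=; ring.
rewrite big_split /= -!mulr_sumr -natr1.
case: J => [|J]; first by rewrite !big_ord0 !mulr0 addr0 mulr_ge0 ?addr_ge0.
rewrite [X in p * X]big_ord_recl /= surv_width0 subr0.
have IHp : p * \sum_(k < J) (1 - surv (bump 0 k) i) <= p * (i%:R * p).
  by rewrite ler_wpM2l // (eq_bigr (fun k : 'I_J => 1 - surv k.+1 i)).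
have IHq : (1 - p) * \sum_(k < J.+1) (1 - surv k.+1 i) <= (1 - p) * (i%:R * p).
  by rewrite ler_wpM2l ?subr_ge0.
have := p_le1; lra.
Qed.

(* Markov's inequality: [P(#ones >= j) <= i p / j]. *)
Lemma surv_markov j i : j%:R - i%:R * p <= j%:R * surv j i.
Proof.
have : \sum_(k < j) (1 - surv j i) <= \sum_(k < j) (1 - surv k.+1 i).
  by apply: ler_sum => k _; rewrite lerD2l lerN2 surv_le_width.
rewrite sumr_const card_ord -[(1 - _) *+ j]mulr_natl mulrBr mulr1.
by have := surv_deficit_sum j i; lra.
Qed.

Lemma exp_depthSS j N :
  exp_depth j.+1 N.+1 = 1 + (1 - p) * exp_depth j.+1 N + p * exp_depth j N.
Proof. by rewrite /exp_depth big_ord_recl big_split /= -!mulr_sumr addrA. Qed.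

Lemma exp_depth_width0 N : exp_depth 0 N = 0.
Proof. by rewrite /exp_depth big1 // => i _; rewrite surv_width0. Qed.

Lemma exp_depth_ge j N :
  2 * j%:R * N%:R - p * N%:R * (N%:R - 1) <= 2 * j%:R * exp_depth j N.
Proof.
elim: N => [|N IH]; first by rewrite /exp_depth big_ord0 !mulr0 mul0r subrr.
rewrite /exp_depth big_ord_recr /= -/(exp_depth j N) -natr1.
by have := surv_markov j N; lra.
Qed.

End Survival.

Fixpoint al_paths (w d : nat) : seq bitseq :=
  match d, w with
  | 0, _ | _, 0 => [:: [::]]
  | d'.+1, w'.+1 => map (cons false) (al_paths w d') ++ map (cons true) (al_paths w' d')
  end.

Lemma al_paths_is_path w d s : s \in al_paths w d -> is_path (al_internal w d) s.
Proof.
elim: d w s => [|d IH] [|w] s /=; rewrite ?inE;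
  try by move=> /eqP ->; apply/is_path_nil; rewrite /al_internal /= ?andbF.
rewrite mem_cat => /orP[] /mapP[s' s'_in ->]; apply/is_path_cons; split=> //.
  by rewrite subn0; apply: IH.
by rewrite subn1; apply: IH.
Qed.

Lemma al_paths_size w d s : s \in al_paths w d -> (size s <= d)%N.
Proof.
elim: d w s => [|d IH] [|w] s /=; rewrite ?inE; try by move=> /eqP ->.
by rewrite mem_cat => /orP[] /mapP[s' s'_in ->] /=; rewrite ltnS; apply: IH s'_in.
Qed.

Lemma al_paths_neq0 w d : al_paths w d != [::].
Proof. by elim: d w => [|d IH] [|w] //=; case: (al_paths w.+1 d) (IH w.+1). Qed.

Lemma sum_weighted_mix (R : comNzRingType) (I : Type) (r : seq I) (W f0 f1 : I -> R) q a b :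
  \sum_(i <- r) W i = 1 ->
  \sum_(i <- r) W i * (q * (a + f1 i) + (1 - q) * (b + f0 i)) =
  q * (a + \sum_(i <- r) W i * f1 i) + (1 - q) * (b + \sum_(i <- r) W i * f0 i).
Proof.
move=> W1; rewrite (eq_bigr (fun i => q * a * W i + q * (W i * f1 i) +
  ((1 - q) * b * W i + (1 - q) * (W i * f0 i)))); last by move=> i _; ring.
by rewrite !big_split /= -!mulr_sumr W1; ring.
Qed.

Lemma exists_ge_avg (R : realFieldType) (T : eqType) (r : seq T) (W f : T -> R) :
  (forall i, i \in r -> 0 <= W i) -> \sum_(i <- r) W i = 1 -> r != [::] ->
  exists2 i, i \in r & \sum_(k <- r) W k * f k <= f i.
Proof.
case: r => [//|i0 r] W_ge0 W1 _; set r0 := i0 :: r in W_ge0 W1 *.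
have [k _ maxk] := arg_maxP (fun k : 'I_(size r0) => f (nth i0 r0 k)) (isT : predT ord0).
exists (nth i0 r0 k); first exact: mem_nth.
rewrite -[X in _ <= X]mul1r -W1 mulr_suml big_seq [X in _ <= X]big_seq.
apply: ler_sum => i i_in; rewrite ler_wpM2l ?W_ge0 //.
have lt_ir : (index i r0 < size r0)%N by rewrite index_mem.
by rewrite -{1}(nth_index i0 i_in); exact: (maxk (Ordinal lt_ir)).
Qed.

Section Adversary.
Variables (R : realType) (X : Type) (A : learner R X) (p : R) (m : nat).
Hypotheses (A_valid : valid_learner A) (p_ge0 : 0 <= p) (p_le1 : p <= 1).

Definition path_weight (s : bitseq) : R := \prod_(b <- s) (if b then p else 1 - p).

Lemma path_weight_ge0 s : 0 <= path_weight s.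
Proof. by apply: prodr_ge0 => -[] _; rewrite ?subr_ge0. Qed.

Lemma sum_path_weight_cons (r : seq bitseq) b :
  \sum_(s <- r) path_weight (b :: s) = (if b then p else 1 - p) * \sum_(s <- r) path_weight s.
Proof. by rewrite mulr_sumr; apply: eq_bigr => s _; rewrite /path_weight big_cons. Qed.

Lemma sum_path_weight w d : \sum_(s <- al_paths w d) path_weight s = 1.
Proof.
elim: d w => [|d IH] [|w] /=; try by rewrite big_seq1 /path_weight big_nil.
by rewrite big_cat !big_map !sum_path_weight_cons !IH !mulr1; exact: subrK.
Qed.

Fixpoint play (t : tree X) (s : bitseq) : seq X :=
  match s, t [::] with
  | b :: s', Some x => nseq m x ++ play (subtree t b) s'
  | _, _ => [::]
  end.

Lemma size_play t s : (size (play t s) <= m * size s)%N.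
Proof.
elim: s t => [|b s IH] t //=; case: (t [::]) => [x|] //.
by rewrite size_cat size_nseq mulnS leq_add2l.
Qed.

(* [S b hs r]: the expected cost when [x] has the hidden label [b] and is
   shown [r] more times.  The learner learns nothing until it predicts 1, so
   it pays either [p] per round or [1 - p] once. *)
Lemma repeat_cost x (S : bool -> history X -> nat -> R) (F : bool -> R) :
  (forall b hs, F b <= S b hs 0) ->
  (forall b hs r, S b hs r.+1 =
     A hs x * ((~~ b)%:R + S b (rcons hs (x, true, Some b)) r)
     + (1 - A hs x) * (b%:R + S b (rcons hs (x, false, None)) r)) ->
  forall r hs, (1 - p) * F false + p * F true + Num.min (p * r%:R) (1 - p)
               <= (1 - p) * S false hs r + p * S true hs r.
Proof.
move=> S0 SS; have F_le_S b r hs : F b <= S b hs r.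
  elim: r hs => [|r IHr] hs; first exact: S0.
  rewrite SS -[F b]mul1r -[1 in X in X <= _](subrK (A hs x)) mulrDl addrC.
  have /andP[q_ge0 q_le1] := A_valid hs x.
  by rewrite lerD // ler_wpM2l ?subr_ge0 // -[F b]add0r lerD.
elim=> [|r IHr] hs.
  rewrite mulr0 min_l ?subr_ge0 // addr0.
  by rewrite lerD // ler_wpM2l ?subr_ge0.
have /andP[q_ge0 q_le1] := A_valid hs x.
set mu := Num.min (p * r.+1%:R) (1 - p); set mu0 := Num.min (p * r%:R) (1 - p) in IHr *.
have mu_le1 : mu <= 1 - p by rewrite ge_min lexx orbT.
have mu_leS : mu <= mu0 + p.
  rewrite /mu /mu0; case: (leP (p * r%:R) (1 - p)) => _.
    by rewrite ge_min -natr1 mulrDr mulr1 lexx.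
  by rewrite ge_min lerDl p_ge0 orbT.
rewrite !SS /=; set q := A hs x.
set a0 := S false (rcons _ _) r; set a1 := S true (rcons _ _) r.
set b0 := S false (rcons _ _) r; set b1 := S true (rcons _ _) r.
have := IHr (rcons hs (x, false, None)); rewrite -/b0 -/b1 => IHb.
have Fa0 : (1 - p) * F false <= (1 - p) * a0 by rewrite ler_wpM2l ?subr_ge0 ?F_le_S.
have Fa1 : p * F true <= p * a1 by rewrite ler_wpM2l ?F_le_S.
have L_le1 : q * ((1 - p) * F false + p * F true + mu) <=
             q * ((1 - p) + ((1 - p) * a0 + p * a1)).
  by rewrite ler_wpM2l //; lra.
have L_le2 : (1 - q) * ((1 - p) * F false + p * F true + mu) <=
             (1 - q) * (p + ((1 - p) * b0 + p * b1)).
  by rewrite ler_wpM2l ?subr_ge0 //; lra.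
lra.
Qed.

Definition beta := Num.min (p * m%:R) (1 - p).

Lemma avg_mistakes_ge N j t (hf : bitseq -> X -> bool) hs :
  (forall s, s \in al_paths j N -> realizes t s (hf s)) ->
  beta * exp_depth p j N <=
  \sum_(s <- al_paths j N) path_weight s * exp_mistakes A (hf s) hs (play t s).
Proof.
have sum_ge0 j' N' t' hf' hs' : 0 <= \sum_(s <- al_paths j' N')
    path_weight s * exp_mistakes A (hf' s) hs' (play t' s).
  by apply: sumr_ge0 => s _; rewrite mulr_ge0 ?path_weight_ge0 ?exp_mistakes_ge0.
elim: N j t hf hs => [|N IH] j t hf hs Rz.
  by rewrite /exp_depth big_ord0 mulr0 sum_ge0.
case: j Rz => [|j] Rz; first by rewrite exp_depth_width0 mulr0 sum_ge0.
pose paths (b : bool) := al_paths (if b then j else j.+1) N.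
have paths_cons b s : s \in paths b -> (b :: s) \in al_paths j.+1 N.+1.
  by case: b => s_in; rewrite /= mem_cat map_f ?orbT.
have [s0 s0_in] : exists s, s \in paths false.
  rewrite /paths /=; case: (al_paths j.+1 N) (al_paths_neq0 j.+1 N) => // s r _.
  by exists s; rewrite mem_head.
have /realizes_cons[+ _] := Rz _ (paths_cons _ _ s0_in).
case tx : (t [::]) => [x|] // _.
have hf_root b s : s \in paths b -> hf (b :: s) x = b.
  by move=> /paths_cons/Rz/realizes_cons[+ _]; rewrite tx => -[].
pose S b hs' r := \sum_(s <- paths b)
  path_weight s * exp_mistakes A (hf (b :: s)) hs' (nseq r x ++ play (subtree t b) s).
pose F b := beta * exp_depth p (if b then j else j.+1) N.
have S0 b hs' : F b <= S b hs' 0.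
  by apply: IH => s /paths_cons/Rz/realizes_cons[].
have SS b hs' r : S b hs' r.+1 =
    A hs' x * ((~~ b)%:R + S b (rcons hs' (x, true, Some b)) r)
    + (1 - A hs' x) * (b%:R + S b (rcons hs' (x, false, None)) r).
  rewrite -sum_weighted_mix; last by case: b; apply: sum_path_weight.
  by apply: eq_big_seq => s /hf_root /= ->.
have := repeat_cost S0 SS m hs; rewrite /F /= -/beta => cost.
have sum_paths b : \sum_(s <- paths b) path_weight (b :: s) *
    exp_mistakes A (hf (b :: s)) hs (play t (b :: s)) = (if b then p else 1 - p) * S b hs m.
  by rewrite /S mulr_sumr; apply: eq_bigr => s _; rewrite /path_weight big_cons /= tx mulrA.
rewrite /= big_cat !big_map (sum_paths false) (sum_paths true) exp_depthSS.
by move: cost; rewrite /paths /=; lra.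
Qed.

End Adversary.

Lemma sqrt_depth_choice (R : realType) k T : (0 < k)%N -> (0 < T)%N ->
  exists N, [/\ (0 < N)%N, (N <= T)%N, (N <= 2 * k * (T %/ N))%N &
    Num.min (Num.sqrt (k%:R * T%:R)) T%:R <= 2 * N%:R :> R].
Proof.
move=> k_gt0 T_gt0; pose P n := ((n <= T) && (n * n <= k * T))%N.
have ub n : P n -> (n <= T)%N by case/andP.
case: (ex_maxnP (ex_intro P 0%N isT) ub) => N /andP[le_NT le_NN] maxN.
have N_gt0 : (0 < N)%N by apply: maxN; rewrite /P T_gt0 mul1n muln_gt0 k_gt0.
exists N; split=> //.
  have := ltn_ceil T N_gt0; have : (0 < T %/ N)%N by rewrite divn_gt0.
  by nia.
case: (ltnP N T) => [lt_NT | le_TN]; last first.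
  by rewrite ge_min; apply/orP; right; rewrite -(ler_nat R) in le_TN; have := ler0n R N; lra.
have lt_kT : (k * T < N.+1 * N.+1)%N.
  by rewrite ltnNge; apply/negP => le; have := maxN N.+1; rewrite /P lt_NT le ltnn => /(_ isT).
have : Num.sqrt (k%:R * T%:R) <= N.+1%:R :> R.
  rewrite -[N.+1%:R]ger0_norm // -sqrtr_sqr ler_wsqrtr // -natrM -natrX ler_nat.
  by rewrite -mulnn ltnW.
have N_ge1 : (1 : R) <= N%:R by rewrite ler1n.
by rewrite ge_min -natr1 => ?; apply/orP; left; lra.
Qed.

Section LowerBound.
Variables (R : realType) (X : Type) (H : set (X -> bool)).
Implicit Types (A : learner R X) (T : nat).

Lemma Mworst_ge0 A T : (0 <= Mworst A T H)%E.
Proof. by apply: le_ereal_sup_tmp; exists 0%E; [left|]. Qed.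

Lemma Mworst_ge_prefix A T h xs : valid_learner A -> H h -> (size xs <= T)%N ->
  ((exp_mistakes A h [::] xs)%:E <= Mworst A T H)%E.
Proof.
move=> A_valid Hh le_xsT; case: xs le_xsT => [|x xs] le_xsT; first exact: Mworst_ge0.
apply: le_ereal_sup_tmp; set ys := (x :: xs) ++ nseq (T - size (x :: xs)) x.
exists (exp_mistakes A h [::] ys)%:E; last by rewrite lee_fin exp_mistakes_cat.
by right; exists h, ys; rewrite size_cat size_nseq subnKC.
Qed.

Lemma Mworst_ge_shattered A p m j N T :
  valid_learner A -> AL_shatterable H j N -> (N * m <= T)%N -> 0 <= p -> p <= 1 ->
  ((beta p m * exp_depth p j N)%:E <= Mworst A T H)%E.
Proof.
move=> A_valid [t [_ Sh]] le_NmT p_ge0 p_le1.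
have /choice[hf Hhf] :
    forall s, exists h, s \in al_paths j N -> H h /\ realizes t s h.
  move=> s; case: (pselect (s \in al_paths j N)) => [/al_paths_is_path/Sh[h]|].
    by exists h.
  by exists (fun _ => false).
have [s s_in avg_le] := exists_ge_avg (fun s => exp_mistakes A (hf s) [::] (play m t s))
  (fun s _ => path_weight_ge0 p_ge0 p_le1 s) (sum_path_weight p j N) (al_paths_neq0 j N).
have := avg_mistakes_ge m A_valid p_ge0 p_le1 [::] (fun s s_in => (Hhf s s_in).2).
move=> /le_trans/(_ avg_le) le_avg.
have le_sT : (size (play m t s) <= T)%N.
  apply: leq_trans (size_play m t s) _; rewrite mulnC (leq_trans _ le_NmT) //.
  by rewrite leq_mul2r (al_paths_size s_in) orbT.
by apply: le_trans _ (Mworst_ge_prefix A_valid (Hhf s s_in).1 le_sT); rewrite lee_fin.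
Qed.

Lemma Mworst_ge_depth A (p : R) m k N T :
  valid_learner A -> AL_shatterable H k N -> (0 < k)%N -> (N * m <= T)%N ->
  0 <= p -> p <= 1 / 2 -> p * N%:R <= k%:R -> 1 / 2 <= p * m%:R ->
  ((N%:R : R)%:E <= (4 : R)%:E * Mworst A T H)%E.
Proof.
move=> A_valid Sh k_gt0 le_NmT p_ge0 p_le p_N p_m.
have p_le1 : p <= 1 by lra.
have beta_ge : 1 / 2 <= beta p m by rewrite le_min p_m /=; lra.
have depth_ge : N%:R / 2 <= exp_depth p k N.
  have k_pos : (0 : R) < k%:R by rewrite ltr0n.
  have pNN := ler_wpM2r (ler0n R N) p_N.
  have pN_ge0 : 0 <= p * N%:R by rewrite mulr_ge0.
  rewrite ler_pdivrMr // -(ler_pM2l k_pos).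
  by have := exp_depth_ge p_ge0 p_le1 k N; lra.
apply: (le_trans (y := ((4 : R)%:E * (beta p m * exp_depth p k N)%:E)%E)).
  have half_ge0 : (0 : R) <= 1 / 2 by rewrite divr_ge0.
  have Nhalf_ge0 : (0 : R) <= N%:R / 2 by rewrite divr_ge0.
  by rewrite -EFinM lee_fin; have := ler_pM half_ge0 Nhalf_ge0 beta_ge depth_ge; lra.
by rewrite lee_wpmul2l ?lee_fin // Mworst_ge_shattered.
Qed.

Lemma Mworst_ge_Ldepth A d T : valid_learner A -> L_shatterable H d -> (d <= T)%N ->
  ((d%:R : R)%:E <= (8 : R)%:E * Mworst A T H)%E.
Proof.
move=> A_valid /(L_shatterable_AL _ (ltnSn d)) Sh le_dT.
have d_le : ((d%:R : R)%:E <= (4 : R)%:E * Mworst A T H)%E.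
  apply: (Mworst_ge_depth (p := 1 / 2) (m := 1%N) A_valid Sh) => //; rewrite ?muln1 //.
    by have d_ge0 := ler0n R d; rewrite -[d.+1%:R]natr1; lra.
  by rewrite mulr1.
by apply: le_trans d_le _; rewrite lee_wpmul2r ?Mworst_ge0 ?lee_fin ?ler_nat.
Qed.

Lemma Mworst_ge_sqrt A k T : valid_learner A -> (0 < k)%N -> (0 < T)%N ->
  (forall d, AL_shatterable H k d) ->
  ((Num.min (Num.sqrt (k%:R * T%:R)) T%:R)%:E <= (8 : R)%:E * Mworst A T H)%E.
Proof.
move=> A_valid k_gt0 T_gt0 Sh.
have [N [N_gt0 le_NT le_N2km min_le]] := sqrt_depth_choice R k_gt0 T_gt0.
set m := (T %/ N)%N in le_N2km.
have m_ge1 : (1 : R) <= m%:R by rewrite ler1n divn_gt0.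
have N_pos : (0 : R) < N%:R by rewrite ltr0n.
pose p : R := Num.min (1 / 2) (k%:R / N%:R).
have p_ge0 : 0 <= p by rewrite /p le_min !divr_ge0.
have p_le : p <= 1 / 2 by rewrite ge_min lexx.
have p_N : p * N%:R <= k%:R by rewrite -ler_pdivlMr // ge_min lexx orbT.
have p_m : 1 / 2 <= p * m%:R.
  rewrite minr_pMl // le_min; apply/andP; split; first lra.
  rewrite mulrAC ler_pdivlMr //.
  have : (N%:R : R) <= (2 * k * m)%:R by rewrite ler_nat.
  by rewrite !natrM; lra.
have le_NmT : (N * m <= T)%N by rewrite mulnC leq_divM.
have := Mworst_ge_depth A_valid (Sh N) k_gt0 le_NmT p_ge0 p_le p_N p_m.
have -> : (8 : R) = 2 * 4 by rewrite -natrM.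
have two_ge0 : (0 <= (2 : R)%:E)%E by rewrite lee_fin.
rewrite EFinM -muleA => /(lee_wpmul2l two_ge0).
by apply: le_trans; rewrite -EFinM lee_fin.
Qed.

End LowerBound.

Lemma min_max_le d (T : orderType d) (a b c y : T) :
  (Order.min a c <= y)%O -> (Order.min b c <= y)%O -> (Order.min (Order.max a b) c <= y)%O.
Proof. by rewrite !ge_min ge_max; case: (c <= y)%O; rewrite ?orbT ?orbF // => -> ->. Qed.

Lemma rate_choice (R : realType) (a T : nat) : exists eps c : R,
  [/\ 0 <= eps, eps <= 1, 0 <= c, ((0 < a)%N -> 1 - eps <= eps * c) &
      eps * T%:R + a%:R * c <= 2 * Num.sqrt (a%:R * T%:R)].
Proof.
have sqrt_ge0 := sqrtr_ge0 (a%:R * T%:R : R).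
case: (leqP T a) => [le_Ta | lt_aT].
  (* few rounds: always predict 1 *)
  exists 1, 0; split; rewrite ?ler01 ?lexx ?subrr ?mulr0 ?addr0 ?mul1r //.
  have : (T%:R ^+ 2 : R) <= a%:R * T%:R by rewrite expr2 ler_wpM2r // ler_nat.
  move=> /ler_wsqrtr; rewrite sqrtr_sqr ger0_norm //; lra.
have T_pos : (0 : R) < T%:R by rewrite ltr0n (leq_ltn_trans _ lt_aT).
set s := Num.sqrt (a%:R * T%:R : R).
have s2 : s ^+ 2 = a%:R * T%:R by rewrite sqr_sqrtr // mulr_ge0.
have as_s : a%:R * (s / a%:R) = s.
  case: (posnP a) => [a0 | a_gt0]; first by rewrite /s a0 !mul0r sqrtr0.
  by rewrite mulrC divfK // gt_eqF ?ltr0n.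
have s_le_T : s <= T%:R.
  have : a%:R * T%:R <= T%:R ^+ 2 :> R by rewrite expr2 ler_wpM2r // ler_nat ltnW.
  by move=> /ler_wsqrtr; rewrite sqrtr_sqr ger0_norm.
exists (s / T%:R), (s / a%:R); split; rewrite ?divr_ge0 //.
- by rewrite ler_pdivrMr // mul1r.
- move=> a_gt0; have -> : s / T%:R * (s / a%:R) = 1.
    rewrite mulrACA -expr2 s2 -invfM [T%:R * _]mulrC divff //.
    by rewrite mulf_neq0 ?(gt_eqF T_pos) // pnatr_eq0 -lt0n.
  have eps_ge0 : 0 <= s / T%:R by rewrite divr_ge0.
  lra.
- by rewrite divfK ?gt_eqF // as_s; lra.
Qed.

(** * Dimensions *)

Section Dimensions.
Variables (R : realType) (X : Type) (H : set (X -> bool)).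
Local Open Scope ereal_scope.

Lemma ALdim_ge0 w : 0 <= ALdim R H w.
Proof. by apply: le_ereal_sup_tmp; exists 0; [left|]. Qed.

Lemma ALdim_shatterable w d : AL_shatterable H w d -> (d%:R)%:E <= ALdim R H w.
Proof. by move=> Sh; apply: le_ereal_sup_tmp; exists (d%:R)%:E => //; right; exists d. Qed.

Lemma ALdim_bounded w : ALdim R H w < +oo -> al_bounded H w.
Proof.
case E : (ALdim R H w) (ALdim_ge0 w) => [r| |] // _ _.
exists (Num.truncn r) => d /ALdim_shatterable; rewrite E lee_fin => le_dr.
by have := le_lt_trans le_dr (truncnS_gt r); rewrite ltr_nat ltnS.
Qed.

Lemma ALdim_unbounded w : ~ ALdim R H w < +oo -> forall d, AL_shatterable H w d.
Proof.
move=> ALinf d; apply: contrapT => NSh; apply: ALinf.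
apply: le_lt_trans (ltey (d%:R)%:E); apply: ge_ereal_sup => _ [->|[d' Sh' <-]].
  by rewrite lee_fin.
rewrite lee_fin ler_nat leqNgt; apply/negP => lt_dd'.
exact/NSh/(AL_shatterable_le_depth (ltnW lt_dd') Sh').
Qed.

Lemma al_depth_le_ALdim w : ((al_depth H w)%:R)%:E <= ALdim R H w.
Proof.
pose P D := AL_shatterable H w D /\ forall d, AL_shatterable H w d -> (d <= D)%N.
case: (pselect (exists D, P D)) => [[D PD] | NP].
  exact/ALdim_shatterable/(xgetI 0%N PD).1.
by rewrite /al_depth (xgetPN 0%N) ?ALdim_ge0 // => D PD; apply: NP; exists D.
Qed.

Variant effW_spec : \bar R -> Prop :=
  | EffWInfty of (forall w, (0 < w)%N -> ~ ALdim R H w < +oo) : effW_spec +oo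
  | EffWFin w of (0 < w)%N & ALdim R H w < +oo &
      (forall v, (0 < v < w)%N -> ~ ALdim R H v < +oo) : effW_spec (w%:R)%:E.

Lemma effWP : effW_spec (effW R H).
Proof.
case: (pselect (exists w, (0 < w)%N /\ ALdim R H w < +oo)) => [exw | Nexw]; last first.
  have -> : effW R H = +oo.
    by apply/ereal_inf_pinfty => y [w finw _]; exfalso; apply: Nexw; exists w.
  by constructor => w w_gt0 finw; apply: Nexw; exists w.
have exP : exists w, `[< (0 < w)%N /\ ALdim R H w < +oo >].
  by case: exw => w ?; exists w; apply/asboolP.
case: (ex_minnP exP) => w /asboolP[w_gt0 finw] minw.
have -> : effW R H = (w%:R)%:E.
  apply/eqP; rewrite eq_le; apply/andP; split.
    by apply: ge_ereal_inf; exists (w%:R)%:E => //; exists w.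
  apply: le_ereal_inf_tmp => _ [v finv <-]; rewrite lee_fin ler_nat.
  exact/minw/asboolP.
constructor=> // v /andP[v_gt0 lt_vw] finv.
by have := minw v (asboolT (conj v_gt0 finv)); rewrite leqNgt lt_vw.
Qed.

End Dimensions.

Section Bounds.
Variables (R : realType) (X : Type) (H : set (X -> bool)) (T : nat).
Local Open Scope ereal_scope.

Lemma Mworst_ge_Ldim (A : learner R X) : valid_learner A ->
  Order.min (Ldim R H) (T%:R)%:E <= (8 : R)%:E * Mworst A T H.
Proof.
move=> A_valid; rewrite ge_min; case: (pselect (L_shatterable H T)) => [ShT | NShT].
  by rewrite (Mworst_ge_Ldepth A_valid ShT) ?orbT.
apply/orP; left; apply: ge_ereal_sup => _ [-> | [d Shd <-]].
  by rewrite mule_ge0 ?lee_fin ?Mworst_ge0.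
have le_dT : (d <= T)%N.
  by rewrite leqNgt; apply/negP => /ltnW/L_shatterable_le_depth/(_ Shd).
exact: Mworst_ge_Ldepth A_valid Shd le_dT.
Qed.

Lemma Mworst_ge_effW (A : learner R X) : valid_learner A ->
  Order.min (sqrte ((effW R H - 1%:E) * (T%:R)%:E)) (T%:R)%:E <= (8 : R)%:E * Mworst A T H.
Proof.
move=> A_valid; case: (posnP T) => [-> | T_gt0].
  by rewrite ge_min mule_ge0 ?lee_fin ?Mworst_ge0 ?orbT.
case: effWP => [inf | w w_gt0 _ minw].
  have := Mworst_ge_sqrt A_valid T_gt0 T_gt0 (ALdim_unbounded (inf T T_gt0)).
  by rewrite -expr2 sqrtr_sqr ger0_norm // minxx ge_min => ->; rewrite orbT.
rewrite -EFinB -EFinM /= -EFin_min.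
case: (eqVneq w 1%N) => [-> | w_neq1].
  by rewrite subrr mul0r sqrtr0 min_l // mule_ge0 ?lee_fin ?Mworst_ge0.
have k_gt0 : (0 < w.-1)%N by rewrite -ltnS prednK // ltn_neqAle eq_sym w_neq1.
have k_lt : (0 < w.-1 < w)%N by rewrite k_gt0 ltn_predL.
have wE : (w%:R - 1 = w.-1%:R :> R)%R by rewrite -{1}(prednK w_gt0) -natr1 addrK.
by rewrite wE; apply: Mworst_ge_sqrt A_valid k_gt0 T_gt0 (ALdim_unbounded (minw _ k_lt)).
Qed.

Lemma minimax_le_ALdim w : effW R H = (w%:R)%:E ->
  minimax R T H <= ALdim R H w + (2 * Num.sqrt ((w%:R - 1) * T%:R))%:E.
Proof.
case: effWP => // w' w_gt0 finw _ /eqP; rewrite eqe eqr_nat => /eqP <-.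
have wE : (w'%:R - 1 = w'.-1%:R :> R)%R by rewrite -{1}(prednK w_gt0) -natr1 addrK.
have [eps [c [eps_ge0 eps_le1 c_ge0 eps_c le_cost]]] := rate_choice R w'.-1 T.
have eps_c' : (1 < w')%N -> (1 - eps <= eps * c)%R.
  by move=> lt_1w; apply: eps_c; rewrite -ltnS prednK.
set A := al_learner H w' eps.
apply: (le_trans (y := Mworst A T H)).
  apply: ge_ereal_inf; exists (Mworst A T H) => //; exists A => //.
  exact: al_learner_valid.
have := Mworst_al_learner eps_ge0 eps_le1 c_ge0 eps_c' T w_gt0 (ALdim_bounded finw).
move=> /le_trans; apply.
rewrite /potential -addrA EFinD leeD ?al_depth_le_ALdim // lee_fin wE.
by rewrite addrC.
Qed.

End Bounds.

Local Open Scope ereal_scope.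

Theorem theorem1 (R : realType) (X : Type) (H : set (X -> bool)) (T : nat) :
  ((1 / 8)%:E * Order.min
      (Order.max (sqrte ((effW R H - 1%:E) * (T%:R)%:E)) (Ldim R H)) (T%:R)%:E
    <= minimax R T H)
  /\
  (forall w : nat, effW R H = (w%:R)%:E ->
     minimax R T H
       <= ALdim R H w + (2 * Num.sqrt ((w%:R - 1) * T%:R))%:E).
Proof.
split; last exact: minimax_le_ALdim.
apply: le_ereal_inf_tmp => _ [A A_valid <-].
rewrite div1r lee_pdivrMl ?ltr0n //.
exact: min_max_le (Mworst_ge_effW H T A_valid) (Mworst_ge_Ldim H T A_valid).
Qed.
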